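(* Let $\beta,\gamma\in(0,1)$ with $\beta\neq\gamma$, and let $\lambda=\frac{1-\beta}{1-\gamma}$. Let $\mathcal{T}$ be the graph with root $\rho$ consisting of a triangle together with the extra vertex $\rho$ attached by an edge to one vertex of the triangle. Then the effective field $R$ of $\mathcal{T}$ satisfies $R\neq1$ and $R\in(\gamma,1/\beta)$.
   Context: For a graph $G=(V,E)$ and $\lambda>0$, $\mu_{G;\beta,\gamma,\lambda}(\sigma)=\lambda^{|\sigma|}\beta^{m_0(\sigma)}\gamma^{m_1(\sigma)}/Z$ for $\sigma:V\to\{0,1\}$, $|\sigma|=\sum_v\sigma(v)$, $m_0,m_1$ the numbers of edges with both endpoints spin $0$, resp. spin $1$. For a graph with distinguished root $\rho$ and $\mu=\mu_{\mathcal{T};\beta,\gamma,\lambda}$, the effective field is $R=\frac{1}{\lambda}\frac{\mu(\sigma(\rho)=1)}{\mu(\sigma(\rho)=0)}$. *)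

From HB Require Import structures.
From mathcomp Require Import all_boot all_order all_algebra.
Set Implicit Arguments. Unset Strict Implicit. Unset Printing Implicit Defensive.
Import Order.TTheory GRing.Theory Num.Theory.
Local Open Scope ring_scope.

Section Spin.
Variables (R : realFieldType) (V : finType).

(* A finite graph is given by its (simple, undirected) edge list E. *)
Definition cfg := {ffun V -> bool}.  (* true = spin 1, false = spin 0 *)

Definition ones (s : cfg) : nat := #|[set v | s v]|.
Definition m0 (E : seq (V * V)) (s : cfg) : nat :=
  count (fun e => ~~ s e.1 && ~~ s e.2) E.
Definition m1 (E : seq (V * V)) (s : cfg) : nat :=
  count (fun e => s e.1 && s e.2) E.

Definition weight (E : seq (V * V)) (beta gamma lambda : R) (s : cfg) : R :=
  lambda ^+ ones s * beta ^+ m0 E s * gamma ^+ m1 E s.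

Definition partfun E beta gamma lambda : R :=
  \sum_(s : cfg) weight E beta gamma lambda s.

Definition gibbs E beta gamma lambda (s : cfg) : R :=
  weight E beta gamma lambda s / partfun E beta gamma lambda.

Definition root_prob E beta gamma lambda (rho : V) (b : bool) : R :=
  \sum_(s : cfg | s rho == b) gibbs E beta gamma lambda s.

Definition effective_field E beta gamma lambda (rho : V) : R :=
  lambda^-1 * (root_prob E beta gamma lambda rho true
               / root_prob E beta gamma lambda rho false).
End Spin.

(* The graph T: vertices 0 (= root rho), 1, 2, 3; triangle 1-2-3, and
   the pendant edge rho-1. *)
Definition T_root : 'I_4 := @Ordinal 4 0 isT.
Definition T_edges : seq ('I_4 * 'I_4) :=
  [:: (@Ordinal 4 0 isT, @Ordinal 4 1 isT);
      (@Ordinal 4 1 isT, @Ordinal 4 2 isT);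
      (@Ordinal 4 2 isT, @Ordinal 4 3 isT);
      (@Ordinal 4 3 isT, @Ordinal 4 1 isT)].

(* Pinning the spin of vertex 1 splits the partition function of T into the
   two weights A, B of the triangle with that vertex fixed to spin 1 or 0; the
   remaining edge to the root then gives R = (gamma A + B) / (A + beta B).
   This is a weighted average of gamma and 1/beta with positive weights A and
   beta B, hence lies strictly between them.  For lambda = (1 - beta)/(1 - gamma)
   one computes (1 - beta) B - (1 - gamma) A = (1 - beta)^3 (beta - gamma), which
   is nonzero, and this is exactly R - 1 times the denominator. *)
From HB Require Import structures.
From mathcomp Require Import all_boot all_order all_algebra ring.
Set Implicit Arguments. Unset Strict Implicit. Unset Printing Implicit Defensive.
Import Order.TTheory GRing.Theory Num.Theory.
Local Open Scope ring_scope.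

Lemma weighted_average_bounds (R : realFieldType) (x y u v : R) :
  0 < u -> 0 < v -> x < y -> x < (x * u + y * v) / (u + v) < y.
Proof.
move=> u_gt0 v_gt0 lt_xy; have uv_gt0 : 0 < u + v by rewrite addr_gt0.
rewrite ltr_pdivlMr // ltr_pdivrMr //; apply/andP; split.
- by rewrite mulrDr ltrD2l ltr_pM2r.
- by rewrite mulrDr ltrD2r ltr_pM2r.
Qed.

Section GibbsWeights.
Variables (R : realFieldType) (V : finType) (E : seq (V * V)).
Variables (beta gamma lambda : R).

Definition pinned_weight (rho : V) (b : bool) : R :=
  \sum_(s : cfg V | s rho == b) weight E beta gamma lambda s.

Lemma root_probE rho b :
  root_prob E beta gamma lambda rho b =
  pinned_weight rho b / partfun E beta gamma lambda.
Proof. by rewrite /root_prob /gibbs mulr_suml. Qed.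

Lemma effective_fieldE rho : partfun E beta gamma lambda != 0 ->
  effective_field E beta gamma lambda rho =
  lambda^-1 * (pinned_weight rho true / pinned_weight rho false).
Proof.
move=> Z_neq0; rewrite /effective_field !root_probE invfM invrK.
by rewrite mulrACA mulVf // mulr1.
Qed.

Hypotheses (beta_gt0 : 0 < beta) (gamma_gt0 : 0 < gamma) (lambda_gt0 : 0 < lambda).

Lemma weight_gt0 s : 0 < weight E beta gamma lambda s.
Proof. by rewrite /weight !mulr_gt0 // exprn_gt0. Qed.

Lemma partfun_gt0 : 0 < partfun E beta gamma lambda.
Proof.
rewrite /partfun (bigD1 [ffun=> false]) //=.
by rewrite ltr_wpDr ?weight_gt0 // sumr_ge0 // => s _; rewrite ltW ?weight_gt0.
Qed.

End GibbsWeights.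

Definition cfg4 (a b c d : bool) : cfg 'I_4 :=
  [ffun i : 'I_4 => nth false [:: a; b; c; d] i].

Lemma cfg4E a b c d i : cfg4 a b c d i = nth false [:: a; b; c; d] i.
Proof. by rewrite ffunE. Qed.

Lemma sum_cfg4 (R : realFieldType) (F : cfg 'I_4 -> R) :
  \sum_(s : cfg 'I_4) F s =
  \sum_(a : bool) \sum_(b : bool) \sum_(c : bool) \sum_(d : bool) F (cfg4 a b c d).
Proof.
pose spins (s : cfg 'I_4) := (s (inord 0), (s (inord 1), (s (inord 2), s (inord 3)))).
pose of_spins (p : bool * (bool * (bool * bool))) :=
  cfg4 p.1 p.2.1 p.2.2.1 p.2.2.2.
rewrite (reindex of_spins); last first.
  exists spins => [[a [b [c d]]] _ | s _]; first by rewrite /spins !cfg4E !inordK.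
  apply/ffunP => i; rewrite cfg4E.
  by case: i => [[|[|[|[|i]]]] ?] //=; congr (s _); apply: val_inj; rewrite /= ?inordK.
rewrite -(pair_big xpredT xpredT (fun a p => F (of_spins (a, p)))).
apply: eq_bigr => a _.
rewrite -(pair_big xpredT xpredT (fun b p => F (of_spins (a, (b, p))))).
apply: eq_bigr => b _.
by rewrite -(pair_big xpredT xpredT (fun c d => F (of_spins (a, (b, (c, d)))))).
Qed.

Lemma ones_cfg4 a b c d : ones (cfg4 a b c d) = (a + b + c + d)%N.
Proof.
rewrite /ones -sum1_card big_mkcond /= !big_ord_recl big_ord0 !in_set !cfg4E /=.
by case: a; case: b; case: c; case: d.
Qed.

Section Triangle.
Variables (R : realFieldType) (beta gamma lambda : R).

(* Weights of the triangle 1-2-3 with vertex 1 pinned to spin 1, resp. 0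
   (the activity of vertex 1 included); the sums run over the spins of 2, 3. *)
Definition triangle_weight1 : R :=
  lambda * (beta + 2 * lambda * gamma + lambda ^+ 2 * gamma ^+ 3).
Definition triangle_weight0 : R :=
  beta ^+ 3 + 2 * lambda * beta + lambda ^+ 2 * gamma.

Lemma pinned_weight_T b :
  pinned_weight T_edges beta gamma lambda T_root b =
  if b then lambda * (gamma * triangle_weight1 + triangle_weight0)
  else triangle_weight1 + beta * triangle_weight0.
Proof.
rewrite /pinned_weight big_mkcond sum_cfg4 !big_bool /=.
rewrite /weight !ones_cfg4 /m0 /m1 /= !cfg4E /= /triangle_weight1 /triangle_weight0.
by case: b => /=; ring.
Qed.

Hypotheses (beta_gt0 : 0 < beta) (gamma_gt0 : 0 < gamma) (lambda_gt0 : 0 < lambda).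

Lemma triangle_weight1_gt0 : 0 < triangle_weight1.
Proof. by rewrite /triangle_weight1 !(mulr_gt0, addr_gt0, exprn_gt0). Qed.

Lemma triangle_weight0_gt0 : 0 < triangle_weight0.
Proof. by rewrite /triangle_weight0 !(mulr_gt0, addr_gt0, exprn_gt0). Qed.

Lemma effective_field_T :
  effective_field T_edges beta gamma lambda T_root =
  (gamma * triangle_weight1 + triangle_weight0) /
  (triangle_weight1 + beta * triangle_weight0).
Proof.
rewrite effective_fieldE ?lt0r_neq0 ?partfun_gt0 // !pinned_weight_T.
by rewrite -mulrA mulKf ?lt0r_neq0.
Qed.

Lemma effective_field_T_subr1 :
  effective_field T_edges beta gamma lambda T_root - 1 =
  ((1 - beta) * triangle_weight0 - (1 - gamma) * triangle_weight1) /
  (triangle_weight1 + beta * triangle_weight0).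
Proof.
have A_gt0 := triangle_weight1_gt0; have B_gt0 := triangle_weight0_gt0.
by rewrite effective_field_T; field; apply: lt0r_neq0; rewrite addr_gt0 // mulr_gt0.
Qed.

End Triangle.

Lemma triangle_weight_gap (R : realFieldType) (beta gamma : R) : gamma != 1 ->
  let lambda := (1 - beta) / (1 - gamma) in
  (1 - beta) * triangle_weight0 beta gamma lambda
    - (1 - gamma) * triangle_weight1 beta gamma lambda
  = (1 - beta) ^+ 3 * (beta - gamma).
Proof.
move=> gamma_neq1 lambda.
by rewrite /triangle_weight0 /triangle_weight1 /lambda; field; rewrite subr_eq0 eq_sym.
Qed.

Theorem lemma4p1 (R : realFieldType) (beta gamma : R) :
  0 < beta -> beta < 1 -> 0 < gamma -> gamma < 1 -> beta != gamma ->
  let lambda := (1 - beta) / (1 - gamma) in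
  let Rf := effective_field T_edges beta gamma lambda T_root in
  Rf != 1 /\ gamma < Rf /\ Rf < beta^-1.
Proof.
move=> beta_gt0 beta_lt1 gamma_gt0 gamma_lt1 beta_neq_gamma lambda Rf.
have lambda_gt0 : 0 < lambda by rewrite divr_gt0 // subr_gt0.
have A_gt0 := triangle_weight1_gt0 beta_gt0 gamma_gt0 lambda_gt0.
have B_gt0 := triangle_weight0_gt0 beta_gt0 gamma_gt0 lambda_gt0.
set A := triangle_weight1 _ _ _ in A_gt0; set B := triangle_weight0 _ _ _ in B_gt0.
have betaB_gt0 : 0 < beta * B by rewrite mulr_gt0.
have gamma_lt_invbeta : gamma < beta^-1.
  by rewrite -(ltr_pM2l beta_gt0) mulfV ?lt0r_neq0 // mulr_ilt1 ?ltW.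
have Rf_average : Rf = (gamma * A + beta^-1 * (beta * B)) / (A + beta * B).
  by rewrite mulKf ?lt0r_neq0 // /Rf effective_field_T.
split; last by apply/andP; rewrite Rf_average weighted_average_bounds.
have den_gt0 : 0 < A + beta * B by rewrite addr_gt0.
have one_sub_beta_neq0 : 1 - beta != 0 by rewrite subr_eq0 gt_eqF.
have beta_sub_gamma_neq0 : beta - gamma != 0 by rewrite subr_eq0.
rewrite -subr_eq0 /Rf effective_field_T_subr1 // triangle_weight_gap; last by rewrite lt_eqF.
apply: mulf_neq0; last by rewrite invr_eq0 lt0r_neq0.
by rewrite mulf_neq0 ?expf_neq0.
Qed.
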